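(* In the altruistic controlled social learning model described in the context, the optimal value function $V^*_A:[0,1]\to\mathbb{R}$ is convex in the public belief $b$.
   Context: A binary state $\omega\in\{G,B\}$ is drawn once with $\mathbb{P}(\omega=G)=b_1$. Agents $i=1,2,\dots$ act in sequence. Before agent $i$ acts, a planner chooses a signal precision $q_i\in[0.5,1]$; agent $i$ receives a private signal $s_i\in\{G,B\}$ with $\mathbb{P}(s_i=\omega)=q_i$, conditionally independent of all other signals and of the history given $\omega$. Let $y(b,q)=1+2bq-b-q$ (probability of signal $G$ at public belief $b$) and $z(b,q)=b+q-2bq=1-y(b,q)$. Agent $i$, with public belief $b_i$, takes action $a_i=s_i$ if $1-q_i\le b_i\le q_i$, $a_i=G$ if $b_i>q_i$, $a_i=B$ if $b_i<1-q_i$. The public belief evolves by $b_{i+1}=\frac{q_ib_i}{y(b_i,q_i)}$ if $s_i=G$ and $b_{i+1}=\frac{(1-q_i)b_i}{z(b_i,q_i)}$ if $s_i=B$ when $1-q_i\le b_i\le q_i$, and $b_{i+1}=b_i$ otherwise. Cost of an incorrect action is $C>0$. The altruistic planner has baseline precision $p\in[0.5,1)$ and a cost function $\beta:[0.5,1]\to[0,\infty)$ that is non-negative, increasing, continuous and concave with $\beta(p)=0$; its instantaneous reward is $r_A(b,q)=-\beta(q)-C\min(b,1-b,1-q)$ (the second term being $-C$ times the probability that $a_i\ne\omega$). Policies are deterministic Markov maps $\pi:[0,1]\to[0.5,1]$ with $q_i=\pi(b_i)$. For a discount factor $\delta\in[0,1)$, $V^\pi_A(b)=\mathbb{E}\big[\sum_{i\ge1}\delta^{i-1}r_A(b_i,\pi(b_i))\mid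 b_1=b\big]$ and $V^*_A(b)=\sup_\pi V^\pi_A(b)$. *)

From Stdlib Require Import Reals Lra.
From Coquelicot Require Import Coquelicot.
Open Scope R_scope.

(* probability of signal G at public belief b, precision q *)
Definition ysig (b q : R) : R := 1 + 2 * b * q - b - q.
Definition zsig (b q : R) : R := b + q - 2 * b * q.

Definition rA (beta : R -> R) (C b q : R) : R :=
  - beta q - C * Rmin b (Rmin (1 - b) (1 - q)).

Definition policy (pi : R -> R) : Prop :=
  forall b, 0 <= b <= 1 -> 1/2 <= pi b <= 1.

(* n-step truncated expected discounted reward
   E[ sum_{i=1}^n delta^(i-1) r_A(b_i, pi b_i) | b_1 = b ],
   computed by first-step decomposition: in the informative region
   1-q <= b <= q the belief moves to qb/y w.p. y and (1-q)b/z w.p. z,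
   otherwise (cascade) it stays put. *)
Fixpoint Vn (beta : R -> R) (C delta : R) (pi : R -> R) (n : nat) (b : R) : R :=
  match n with
  | O => 0
  | S m =>
      let q := pi b in
      rA beta C b q + delta *
        (if Rle_dec (1 - q) b then
           if Rle_dec b q then
             ysig b q * Vn beta C delta pi m (q * b / ysig b q)
             + zsig b q * Vn beta C delta pi m ((1 - q) * b / zsig b q)
           else Vn beta C delta pi m b
         else Vn beta C delta pi m b)
  end.

Definition VA (beta : R -> R) (C delta : R) (pi : R -> R) (b : R) : R :=
  real (Lim_seq (fun n => Vn beta C delta pi n b)).

Definition VAstar (beta : R -> R) (C delta : R) (b : R) : R :=
  real (Lub_Rbar (fun v => exists pi, policy pi /\ v = VA beta C delta pi b)).

Definition continuous_on_Icc (f : R -> R) (a c : R) : Prop :=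
  forall x, a <= x <= c ->
    forall eps : R, 0 < eps -> exists d : R, 0 < d /\
      forall y, a <= y <= c -> Rabs (y - x) < d -> Rabs (f y - f x) < eps.

From Stdlib Require Import Reals Lra Lia ClassicalEpsilon.
From Coquelicot Require Import Coquelicot.
Open Scope R_scope.

(* Value iteration U_0 = 0, U_(n+1) = T U_n, with the Bellman operator
   (T V)(b) = sup_(1/2 <= q <= 1) [r_A(b,q) + delta E V(b')], approximates V*_A
   uniformly at rate delta^n: every policy value is below U_n + K delta^n, and a
   policy that is eps-greedy for U_n reaches U_n - 3 K delta^n - eps.  So it suffices
   that T preserves convexity.  In the informative region the expected continuation
   y V(qb/y) + z V((1-q)b/z) is a sum of perspectives (u+v) V(u/(u+v)) at arguments
   affine in b, hence convex in b and in q.  A precision q causing a cascade at b lies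
   between 1/2 and max(b, 1-b), so by concavity of beta and convexity in q its
   informative formula is below a mixture of two values attained by T V.  Thus every
   Q-value at b is bounded by one of two convex functions of b that stay below T V. *)

Lemma ysigE b q : ysig b q = q * b + (1 - q) * (1 - b).
Proof. unfold ysig; ring. Qed.

Lemma zsigE b q : zsig b q = (1 - q) * b + q * (1 - b).
Proof. unfold zsig; ring. Qed.

Lemma div_add_01 u v : 0 <= u -> 0 <= v -> 0 <= u / (u + v) <= 1.
Proof.
  intros Hu Hv. destruct (Rle_lt_or_eq_dec 0 (u + v)) as [Hpos | Hzero]; [lra| |].
  - split; [apply Rdiv_le_0_compat; lra | apply (Rdiv_le_1 u (u + v) Hpos); lra].
  - replace u with 0 by lra. unfold Rdiv. rewrite Rmult_0_l. lra.
Qed.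

Lemma signal_probs b q : 0 <= b <= 1 -> 0 <= q <= 1 ->
  0 <= ysig b q /\ 0 <= zsig b q /\ ysig b q + zsig b q = 1.
Proof. intros Hb Hq. rewrite ysigE, zsigE. repeat split; nra. Qed.

Lemma posteriors_01 b q : 0 <= b <= 1 -> 0 <= q <= 1 ->
  0 <= q * b / ysig b q <= 1 /\ 0 <= (1 - q) * b / zsig b q <= 1.
Proof. intros Hb Hq. rewrite ysigE, zsigE. split; apply div_add_01; nra. Qed.

Definition signal_avg (V : R -> R) (b q : R) : R :=
  ysig b q * V (q * b / ysig b q) + zsig b q * V ((1 - q) * b / zsig b q).

Definition continuation (V : R -> R) (b q : R) : R :=
  if Rle_dec (1 - q) b then if Rle_dec b q then signal_avg V b q else V b else V b.

Lemma continuation_shift V W e b q : 0 <= b <= 1 -> 0 <= q <= 1 ->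
  (forall x, 0 <= x <= 1 -> V x <= W x + e) ->
  continuation V b q <= continuation W b q + e.
Proof.
  intros Hb Hq HVW. unfold continuation, signal_avg.
  destruct (Rle_dec (1 - q) b); [destruct (Rle_dec b q)|]; try (apply HVW; exact Hb).
  destruct (signal_probs b q Hb Hq) as (Hy & Hz & Hsum).
  destruct (posteriors_01 b q Hb Hq) as [HG HB].
  pose proof (Rmult_le_compat_l _ _ _ Hy (HVW _ HG)).
  pose proof (Rmult_le_compat_l _ _ _ Hz (HVW _ HB)).
  assert (e = ysig b q * e + zsig b q * e) by (rewrite <- Rmult_plus_distr_r, Hsum; ring).
  lra.
Qed.

Lemma continuation_const c b q : 0 <= b <= 1 -> 0 <= q <= 1 ->
  continuation (fun _ => c) b q = c.
Proof.
  intros Hb Hq. destruct (signal_probs b q Hb Hq) as (_ & _ & Hsum).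
  unfold continuation, signal_avg.
  destruct (Rle_dec (1 - q) b); [destruct (Rle_dec b q)|]; try reflexivity.
  rewrite <- Rmult_plus_distr_r, Hsum. ring.
Qed.

Lemma Lub_Rbar_real_is_lub (E : R -> Prop) x B :
  E x -> is_upper_bound E B -> is_lub E (real (Lub_Rbar E)).
Proof.
  intros Hx HB. destruct (Lub_Rbar_correct E) as [Hub Hleast].
  destruct (Lub_Rbar E) as [l | |]; simpl in *.
  - split; [exact Hub|]. intros c Hc. exact (Hleast (Finite c) Hc).
  - destruct (Hleast (Finite B) HB).
  - destruct (Hub x Hx).
Qed.

Lemma is_lub_approx (E : R -> Prop) m eps :
  is_lub E m -> 0 < eps -> exists x, E x /\ m - eps < x.
Proof.
  intros [_ Hleast] Heps. apply not_all_not_ex. intro Hnone.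
  enough (m <= m - eps) by lra.
  apply Hleast. intros x Hx. apply Rnot_lt_le. intro Hlt. exact (Hnone x (conj Hx Hlt)).
Qed.

Lemma Lim_seq_real_near (u : nat -> R) n e :
  (forall k, Rabs (u (k + n)%nat - u n) <= e) -> Rabs (real (Lim_seq u) - u n) <= e.
Proof.
  intros Hu.
  assert (Hev : forall k, (n <= k)%nat -> u n - e <= u k <= u n + e).
  { intros k Hk. apply Rabs_le_between'.
    replace k with (k - n + n)%nat by lia. apply Hu. }
  assert (Hlo : Rbar_le (u n - e) (Lim_seq u)).
  { rewrite <- (Lim_seq_const (u n - e)). apply Lim_seq_le_loc.
    exists n. intros k Hk. apply Hev, Hk. }
  assert (Hhi : Rbar_le (Lim_seq u) (u n + e)).
  { rewrite <- (Lim_seq_const (u n + e)). apply Lim_seq_le_loc.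
    exists n. intros k Hk. apply Hev, Hk. }
  destruct (Lim_seq u) as [l | |]; simpl in *; try contradiction.
  apply Rabs_le_between'. lra.
Qed.

Lemma geometric_tail (u : nat -> R) M d : 0 <= d < 1 ->
  (forall m, Rabs (u (S m) - u m) <= M * d ^ m) ->
  forall n k, Rabs (u (k + n)%nat - u n) <= M / (1 - d) * d ^ n.
Proof.
  intros Hd Hu n.
  assert (HM : 0 <= M) by (pose proof (Hu 0%nat); pose proof (Rabs_pos (u 1%nat - u 0%nat)); simpl in *; lra).
  assert (Hpart : forall k, Rabs (u (k + n)%nat - u n) <= M / (1 - d) * (d ^ n - d ^ (k + n))).
  { induction k as [|k IHk].
    - simpl. rewrite !Rminus_diag, Rabs_R0. lra.
    - replace (S k + n)%nat with (S (k + n)) by lia.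
      replace (u (S (k + n)) - u n) with ((u (S (k + n)) - u (k + n)%nat) + (u (k + n)%nat - u n)) by ring.
      eapply Rle_trans; [apply Rabs_triang|].
      pose proof (Hu (k + n)%nat). simpl pow.
      apply Rle_trans with (M * d ^ (k + n) + M / (1 - d) * (d ^ n - d ^ (k + n))); [lra|].
      right. field. lra. }
  intro k. eapply Rle_trans; [apply Hpart|].
  apply Rmult_le_compat_l; [apply Rdiv_le_0_compat; lra|].
  pose proof (pow_le d (k + n) (proj1 Hd)). lra.
Qed.

Lemma le_of_le_geometric a b c d : 0 <= d < 1 -> (forall n, a <= b + c * d ^ n) -> a <= b.
Proof.
  intros Hd H.
  assert (Hlim : is_lim_seq (fun n => b + c * d ^ n) (b + c * 0)).
  { apply is_lim_seq_plus'; [apply is_lim_seq_const|].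
    apply (is_lim_seq_scal_l _ c 0), is_lim_seq_geom. rewrite Rabs_pos_eq; lra. }
  rewrite Rmult_0_r, Rplus_0_r in Hlim.
  exact (is_lim_seq_le (fun _ => a) _ a b H (is_lim_seq_const a) Hlim).
Qed.

Definition convex01 (f : R -> R) : Prop :=
  forall x y t, 0 <= x <= 1 -> 0 <= y <= 1 -> 0 <= t <= 1 ->
    f (t * x + (1 - t) * y) <= t * f x + (1 - t) * f y.

Lemma convex01_approx f (g : nat -> R -> R) c d : 0 <= d < 1 ->
  (forall n, convex01 (g n)) ->
  (forall n x, 0 <= x <= 1 -> Rabs (f x - g n x) <= c * d ^ n) -> convex01 f.
Proof.
  intros Hd Hg Hfg x y t Hx Hy Ht.
  assert (Hz : 0 <= t * x + (1 - t) * y <= 1) by nra.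
  apply (le_of_le_geometric _ _ (2 * c) d Hd). intro n.
  pose proof (Hg n x y t Hx Hy Ht) as Hconv.
  pose proof (proj1 (Rabs_le_between' _ _ _) (Hfg n _ Hz)).
  pose proof (proj1 (Rabs_le_between' _ _ _) (Hfg n _ Hx)) as [Hx' _].
  pose proof (proj1 (Rabs_le_between' _ _ _) (Hfg n _ Hy)) as [Hy' _].
  pose proof (Rmult_le_compat_l t _ _ (proj1 Ht) Hx').
  pose proof (Rmult_le_compat_l (1 - t) _ _ ltac:(lra) Hy').
  lra.
Qed.

Definition perspective (f : R -> R) (u v : R) : R := (u + v) * f (u / (u + v)).

Lemma perspective_convex f u1 v1 u2 v2 u v t : convex01 f ->
  0 <= u1 -> 0 <= v1 -> 0 <= u2 -> 0 <= v2 -> 0 <= t <= 1 ->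
  u = t * u1 + (1 - t) * u2 -> v = t * v1 + (1 - t) * v2 ->
  perspective f u v <= t * perspective f u1 v1 + (1 - t) * perspective f u2 v2.
Proof.
  intros Hf Hu1 Hv1 Hu2 Hv2 Ht -> ->. unfold perspective.
  assert (Hx1 := div_add_01 u1 v1 Hu1 Hv1). assert (Hx2 := div_add_01 u2 v2 Hu2 Hv2).
  set (s1 := u1 + v1) in *. set (s2 := u2 + v2) in *.
  replace (t * u1 + (1 - t) * u2 + (t * v1 + (1 - t) * v2)) with (t * s1 + (1 - t) * s2)
    by (unfold s1, s2; ring).
  assert (Hw1 : 0 <= t * s1) by (unfold s1; nra).
  assert (Hw2 : 0 <= (1 - t) * s2) by (unfold s2; nra).
  destruct (Req_dec (t * s1 + (1 - t) * s2) 0) as [H0 | H0].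
  { rewrite H0, Rmult_0_l, <- !Rmult_assoc.
    replace (t * s1) with 0 by lra. replace ((1 - t) * s2) with 0 by lra. lra. }
  assert (Hlam := div_add_01 _ _ Hw1 Hw2).
  set (S := t * s1 + (1 - t) * s2) in *. set (lam := t * s1 / S) in *.
  assert (Hlam' : 1 - lam = (1 - t) * s2 / S) by (unfold lam, S; field; exact H0).
  (* Also for s = 0, where u = 0 and the junk value u / 0 is irrelevant. *)
  assert (Hcancel : forall u s, 0 <= u -> 0 <= s - u -> s * (u / s) = u).
  { intros u s Hu Hs. destruct (Req_dec s 0) as [-> | Hs0].
    - replace u with 0 by lra. unfold Rdiv. ring.
    - field. exact Hs0. }
  assert (Hpt : (t * u1 + (1 - t) * u2) / S = lam * (u1 / s1) + (1 - lam) * (u2 / s2)).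
  { rewrite Hlam'. unfold lam.
    rewrite <- (Hcancel u1 s1) at 1 by (unfold s1; lra).
    rewrite <- (Hcancel u2 s2) at 1 by (unfold s2; lra).
    unfold Rdiv. ring. }
  rewrite Hpt.
  apply Rle_trans with (S * (lam * f (u1 / s1) + (1 - lam) * f (u2 / s2))).
  - apply Rmult_le_compat_l; [unfold S; lra | apply Hf; assumption].
  - right. rewrite Hlam'. unfold lam. field. exact H0.
Qed.

Lemma signal_avg_perspective V b q : signal_avg V b q =
  perspective V (q * b) ((1 - q) * (1 - b)) + perspective V ((1 - q) * b) (q * (1 - b)).
Proof. unfold signal_avg, perspective. rewrite ysigE, zsigE. reflexivity. Qed.

Lemma signal_avg_convex_b V q : convex01 V -> 0 <= q <= 1 -> convex01 (fun b => signal_avg V b q).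
Proof.
  intros HV Hq x y t Hx Hy Ht. rewrite !signal_avg_perspective.
  pose proof (perspective_convex V (q * x) ((1 - q) * (1 - x)) (q * y) ((1 - q) * (1 - y))
    (q * (t * x + (1 - t) * y)) ((1 - q) * (1 - (t * x + (1 - t) * y))) t HV
    ltac:(nra) ltac:(nra) ltac:(nra) ltac:(nra) Ht ltac:(ring) ltac:(ring)).
  pose proof (perspective_convex V ((1 - q) * x) (q * (1 - x)) ((1 - q) * y) (q * (1 - y))
    ((1 - q) * (t * x + (1 - t) * y)) (q * (1 - (t * x + (1 - t) * y))) t HV
    ltac:(nra) ltac:(nra) ltac:(nra) ltac:(nra) Ht ltac:(ring) ltac:(ring)).
  lra.
Qed.

Lemma signal_avg_convex_q V b : convex01 V -> 0 <= b <= 1 -> convex01 (signal_avg V b).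
Proof.
  intros HV Hb q1 q2 t Hq1 Hq2 Ht. rewrite !signal_avg_perspective.
  pose proof (perspective_convex V (q1 * b) ((1 - q1) * (1 - b)) (q2 * b) ((1 - q2) * (1 - b))
    ((t * q1 + (1 - t) * q2) * b) ((1 - (t * q1 + (1 - t) * q2)) * (1 - b)) t HV
    ltac:(nra) ltac:(nra) ltac:(nra) ltac:(nra) Ht ltac:(ring) ltac:(ring)).
  pose proof (perspective_convex V ((1 - q1) * b) (q1 * (1 - b)) ((1 - q2) * b) (q2 * (1 - b))
    ((1 - (t * q1 + (1 - t) * q2)) * b) ((t * q1 + (1 - t) * q2) * (1 - b)) t HV
    ltac:(nra) ltac:(nra) ltac:(nra) ltac:(nra) Ht ltac:(ring) ltac:(ring)).
  lra.
Qed.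

Lemma signal_avg_half V b : signal_avg V b (1/2) = V b.
Proof.
  unfold signal_avg. rewrite ysigE, zsigE.
  replace (1 / 2 * b + (1 - 1 / 2) * (1 - b)) with (1/2) by field.
  replace ((1 - 1 / 2) * b + 1 / 2 * (1 - b)) with (1/2) by field.
  replace (1 / 2 * b / (1 / 2)) with b by field.
  replace ((1 - 1 / 2) * b / (1 / 2)) with b by field.
  field.
Qed.

Section Bellman.

Variables (beta : R -> R) (C delta : R).
Hypothesis C_pos : 0 < C.
Hypothesis delta_01 : 0 <= delta < 1.
Hypothesis beta_range : forall q, 1/2 <= q <= 1 -> 0 <= beta q <= beta 1.

Let K := (beta 1 + C) / (1 - delta).

Lemma K_nonneg : 0 <= K.
Proof. pose proof (beta_range 1). unfold K. apply Rdiv_le_0_compat; lra. Qed.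

Lemma K_fixpoint : beta 1 + C + delta * K = K.
Proof. unfold K. field. lra. Qed.

Definition bounded01 (V : R -> R) : Prop := forall x, 0 <= x <= 1 -> - K <= V x <= 0.

Definition qvalue (V : R -> R) (b q : R) : R := rA beta C b q + delta * continuation V b q.

Definition bellman (V : R -> R) (b : R) : R :=
  real (Lub_Rbar (fun x => exists q, 1/2 <= q <= 1 /\ x = qvalue V b q)).

Fixpoint value_iter (n : nat) : R -> R :=
  match n with
  | O => fun _ => 0
  | S m => bellman (value_iter m)
  end.

Lemma rA_bounds b q : 0 <= b <= 1 -> 1/2 <= q <= 1 -> - (beta 1 + C) <= rA beta C b q <= 0.
Proof.
  intros Hb Hq. pose proof (beta_range q Hq). unfold rA.
  assert (0 <= Rmin b (Rmin (1 - b) (1 - q)) <= 1) by (unfold Rmin; repeat destruct Rle_dec; lra).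
  nra.
Qed.

Lemma qvalue_zero b q : 0 <= b <= 1 -> 1/2 <= q <= 1 -> qvalue (fun _ => 0) b q = rA beta C b q.
Proof. intros Hb Hq. unfold qvalue. rewrite continuation_const by lra. ring. Qed.

Lemma qvalue_shift V W e b q : 0 <= b <= 1 -> 1/2 <= q <= 1 ->
  (forall x, 0 <= x <= 1 -> V x <= W x + e) -> qvalue V b q <= qvalue W b q + delta * e.
Proof.
  intros Hb Hq HVW. unfold qvalue.
  pose proof (continuation_shift V W e b q Hb ltac:(lra) HVW). nra.
Qed.

Lemma qvalue_dist V W e b q : 0 <= b <= 1 -> 1/2 <= q <= 1 ->
  (forall x, 0 <= x <= 1 -> Rabs (V x - W x) <= e) ->
  Rabs (qvalue V b q - qvalue W b q) <= delta * e.
Proof.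
  intros Hb Hq HVW. apply Rabs_le_between'. split.
  - enough (qvalue W b q <= qvalue V b q + delta * e) by lra.
    apply qvalue_shift; auto. intros x Hx.
    pose proof (proj1 (Rabs_le_between' _ _ _) (HVW x Hx)). lra.
  - apply qvalue_shift; auto. intros x Hx.
    pose proof (proj1 (Rabs_le_between' _ _ _) (HVW x Hx)). lra.
Qed.

Lemma qvalue_bounded V b q : bounded01 V -> 0 <= b <= 1 -> 1/2 <= q <= 1 ->
  - K <= qvalue V b q <= 0.
Proof.
  intros HV Hb Hq.
  assert (Hlo : continuation (fun _ => - K) b q <= continuation V b q + 0).
  { apply continuation_shift; [exact Hb | lra |]. intros x Hx. pose proof (HV x Hx). lra. }
  assert (Hhi : continuation V b q <= continuation (fun _ => 0) b q + 0).
  { apply continuation_shift; [exact Hb | lra |]. intros x Hx. pose proof (HV x Hx). lra. }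
  rewrite continuation_const in Hlo, Hhi by lra.
  pose proof (rA_bounds b q Hb Hq). pose proof K_fixpoint. unfold qvalue. nra.
Qed.

Lemma bellman_is_lub V b c : 0 <= b <= 1 ->
  (forall q, 1/2 <= q <= 1 -> qvalue V b q <= c) ->
  is_lub (fun x => exists q, 1/2 <= q <= 1 /\ x = qvalue V b q) (bellman V b).
Proof.
  intros Hb Hc. apply (Lub_Rbar_real_is_lub _ (qvalue V b (1/2)) c).
  - exists (1/2). split; [lra | reflexivity].
  - intros x [q [Hq ->]]. exact (Hc q Hq).
Qed.

Lemma bellman_le V b c : 0 <= b <= 1 ->
  (forall q, 1/2 <= q <= 1 -> qvalue V b q <= c) -> bellman V b <= c.
Proof.
  intros Hb Hc. apply (proj2 (bellman_is_lub V b c Hb Hc)).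
  intros x [q [Hq ->]]. exact (Hc q Hq).
Qed.

Lemma bellman_ge V b q : bounded01 V -> 0 <= b <= 1 -> 1/2 <= q <= 1 ->
  qvalue V b q <= bellman V b.
Proof.
  intros HV Hb Hq. apply (proj1 (bellman_is_lub V b 0 Hb (fun q' Hq' => proj2 (qvalue_bounded V b q' HV Hb Hq')))).
  exists q. split; [exact Hq | reflexivity].
Qed.

Lemma bellman_approx V b eps : bounded01 V -> 0 <= b <= 1 -> 0 < eps ->
  exists q, 1/2 <= q <= 1 /\ bellman V b - eps < qvalue V b q.
Proof.
  intros HV Hb Heps.
  destruct (is_lub_approx _ _ eps (bellman_is_lub V b 0 Hb (fun q Hq => proj2 (qvalue_bounded V b q HV Hb Hq))) Heps)
    as [x [[q [Hq ->]] Hx]].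
  exists q. split; assumption.
Qed.

Lemma bellman_bounded V : bounded01 V -> bounded01 (bellman V).
Proof.
  intros HV b Hb. split.
  - eapply Rle_trans; [apply (qvalue_bounded V b (1/2)) | apply bellman_ge]; auto; lra.
  - apply bellman_le; [exact Hb|]. intros q Hq. apply (qvalue_bounded V b q HV Hb Hq).
Qed.

Lemma bellman_dist V W e b : bounded01 V -> bounded01 W -> 0 <= b <= 1 ->
  (forall x, 0 <= x <= 1 -> Rabs (V x - W x) <= e) ->
  Rabs (bellman V b - bellman W b) <= delta * e.
Proof.
  intros HV HW Hb HVW. apply Rabs_le_between'. split.
  - enough (bellman W b <= bellman V b + delta * e) by lra.
    apply bellman_le; [exact Hb|]. intros q Hq.
    pose proof (proj1 (Rabs_le_between' _ _ _) (qvalue_dist V W e b q Hb Hq HVW)).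
    pose proof (bellman_ge V b q HV Hb Hq). lra.
  - apply bellman_le; [exact Hb|]. intros q Hq.
    pose proof (proj1 (Rabs_le_between' _ _ _) (qvalue_dist V W e b q Hb Hq HVW)).
    pose proof (bellman_ge W b q HW Hb Hq). lra.
Qed.

Lemma value_iter_bounded n : bounded01 (value_iter n).
Proof.
  induction n as [|n IHn]; simpl.
  - intros x _. pose proof K_nonneg. lra.
  - apply bellman_bounded, IHn.
Qed.

Lemma value_iter_increment n x : 0 <= x <= 1 ->
  Rabs (value_iter (S n) x - value_iter n x) <= (beta 1 + C) * delta ^ n.
Proof.
  revert x. induction n as [|n IHn]; intros x Hx.
  - simpl. rewrite Rminus_0_r, Rmult_1_r. apply Rabs_le_between. split.
    + eapply Rle_trans; [|apply (bellman_ge _ x (1/2)); try lra].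
      * rewrite qvalue_zero by lra. apply (rA_bounds x (1/2) Hx); lra.
      * intros y _. pose proof K_nonneg. lra.
    + pose proof (beta_range 1). apply Rle_trans with 0; [|lra].
      apply bellman_le; [exact Hx|]. intros q Hq. rewrite qvalue_zero by lra.
      apply (rA_bounds x q Hx Hq).
  - replace ((beta 1 + C) * delta ^ S n) with (delta * ((beta 1 + C) * delta ^ n)) by (simpl; ring).
    exact (bellman_dist _ _ _ x (value_iter_bounded (S n)) (value_iter_bounded n) Hx IHn).
Qed.

Lemma Vn_S pi n b : Vn beta C delta pi (S n) b = qvalue (Vn beta C delta pi n) b (pi b).
Proof. reflexivity. Qed.

Lemma Vn_increment pi n x : policy pi -> 0 <= x <= 1 ->
  Rabs (Vn beta C delta pi (S n) x - Vn beta C delta pi n x) <= (beta 1 + C) * delta ^ n.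
Proof.
  intros Hpi. revert x. induction n as [|n IHn]; intros x Hx.
  - rewrite Vn_S. change (Vn beta C delta pi 0) with (fun _ : R => 0).
    rewrite qvalue_zero by auto. pose proof (rA_bounds x (pi x) Hx (Hpi x Hx)).
    apply Rabs_le_between. simpl. lra.
  - rewrite (Vn_S pi (S n)), (Vn_S pi n).
    replace ((beta 1 + C) * delta ^ S n) with (delta * ((beta 1 + C) * delta ^ n)) by (simpl; ring).
    exact (qvalue_dist _ _ _ x (pi x) Hx (Hpi x Hx) IHn).
Qed.

Lemma VA_near_Vn pi n b : policy pi -> 0 <= b <= 1 ->
  Rabs (VA beta C delta pi b - Vn beta C delta pi n b) <= K * delta ^ n.
Proof.
  intros Hpi Hb. apply (Lim_seq_real_near (fun m => Vn beta C delta pi m b)). intro k.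
  apply (geometric_tail (fun m => Vn beta C delta pi m b)); [exact delta_01|].
  intro m. exact (Vn_increment pi m b Hpi Hb).
Qed.

Lemma Vn_le_value_iter pi n x : policy pi -> 0 <= x <= 1 ->
  Vn beta C delta pi n x <= value_iter n x.
Proof.
  intros Hpi. revert x. induction n as [|n IHn]; intros x Hx; [simpl; lra|].
  rewrite Vn_S. simpl value_iter.
  apply Rle_trans with (qvalue (value_iter n) x (pi x) + delta * 0).
  - apply qvalue_shift; auto. intros y Hy. rewrite Rplus_0_r. auto.
  - rewrite Rmult_0_r, Rplus_0_r. apply bellman_ge; auto using value_iter_bounded.
Qed.

Lemma Vn_lower_bound pi W eta m x : policy pi -> bounded01 W -> 0 <= eta ->
  (forall y, 0 <= y <= 1 -> W y - eta <= qvalue W y (pi y)) -> 0 <= x <= 1 ->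
  W x - eta / (1 - delta) - K * delta ^ m <= Vn beta C delta pi m x.
Proof.
  intros Hpi HW Heta Hgreedy. revert x. induction m as [|m IHm]; intros x Hx.
  - simpl. pose proof (HW x Hx). pose proof K_nonneg.
    assert (0 <= eta / (1 - delta)) by (apply Rdiv_le_0_compat; lra). lra.
  - rewrite Vn_S.
    assert (Hstep : qvalue W x (pi x) <= qvalue (Vn beta C delta pi m) x (pi x)
                      + delta * (eta / (1 - delta) + K * delta ^ m)).
    { apply qvalue_shift; auto. intros y Hy. pose proof (IHm y Hy). lra. }
    pose proof (Hgreedy x Hx).
    assert (eta + delta * (eta / (1 - delta) + K * delta ^ m) = eta / (1 - delta) + K * delta ^ S m)
      by (simpl; field; lra).
    lra.
Qed.

Lemma greedy_policy W eps : bounded01 W -> 0 < eps ->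
  exists pi, policy pi /\ forall x, 0 <= x <= 1 -> bellman W x - eps < qvalue W x (pi x).
Proof.
  intros HW Heps.
  destruct (choice (fun x q => 1/2 <= q <= 1 /\ (0 <= x <= 1 -> bellman W x - eps < qvalue W x q)))
    as [pi Hpi].
  - intro x. destruct (classic (0 <= x <= 1)) as [Hx | Hx].
    + destruct (bellman_approx W x eps HW Hx Heps) as [q [Hq Hlt]]. exists q. auto.
    + exists (1/2). split; [lra | contradiction].
  - exists pi. split; [intros x _; apply Hpi | intros x Hx; apply Hpi, Hx].
Qed.

Lemma VA_le_value_iter pi n b : policy pi -> 0 <= b <= 1 ->
  VA beta C delta pi b <= value_iter n b + K * delta ^ n.
Proof.
  intros Hpi Hb. pose proof (proj1 (Rabs_le_between' _ _ _) (VA_near_Vn pi n b Hpi Hb)).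
  pose proof (Vn_le_value_iter pi n b Hpi Hb). lra.
Qed.

Lemma VAstar_is_lub b : 0 <= b <= 1 ->
  is_lub (fun v => exists pi, policy pi /\ v = VA beta C delta pi b) (VAstar beta C delta b).
Proof.
  intros Hb. apply (Lub_Rbar_real_is_lub _ (VA beta C delta (fun _ => 1/2) b) (value_iter 0 b + K * delta ^ 0)).
  - exists (fun _ => 1/2). split; [intros x _; lra | reflexivity].
  - intros v [pi [Hpi ->]]. exact (VA_le_value_iter pi 0 b Hpi Hb).
Qed.

Lemma VAstar_near_value_iter n b : 0 <= b <= 1 ->
  Rabs (VAstar beta C delta b - value_iter n b) <= 3 * K * delta ^ n.
Proof.
  intros Hb. destruct (VAstar_is_lub b Hb) as [Hub Hleast].
  pose proof (pow_le delta n (proj1 delta_01)) as Hdn.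
  assert (HKd : 0 <= K * delta ^ n) by (apply Rmult_le_pos; [apply K_nonneg | exact Hdn]).
  apply Rabs_le_between'. split.
  - apply Rle_plus_epsilon. intros e He.
    destruct (greedy_policy (value_iter n) (e * (1 - delta)) (value_iter_bounded n) ltac:(nra))
      as [pi [Hpi Hgreedy]].
    set (eta := (beta 1 + C) * delta ^ n + e * (1 - delta)).
    assert (Hnear : forall y, 0 <= y <= 1 -> value_iter n y - eta <= qvalue (value_iter n) y (pi y)).
    { intros y Hy. pose proof (Hgreedy y Hy).
      pose proof (proj1 (Rabs_le_between' _ _ _) (value_iter_increment n y Hy)).
      simpl in *. unfold eta. lra. }
    assert (Heta : 0 <= eta) by (unfold eta; pose proof (beta_range 1); nra).
    pose proof (Vn_lower_bound pi (value_iter n) eta n b Hpi (value_iter_bounded n) Heta Hnear Hb).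
    pose proof (proj1 (Rabs_le_between' _ _ _) (VA_near_Vn pi n b Hpi Hb)).
    pose proof (Hub _ (ex_intro _ pi (conj Hpi eq_refl))).
    assert (eta / (1 - delta) = K * delta ^ n + e) by (unfold eta, K; field; lra).
    lra.
  - apply Hleast. intros v [pi [Hpi ->]].
    pose proof (VA_le_value_iter pi n b Hpi Hb). lra.
Qed.

Section Convexity.

Hypothesis beta_half : beta (1/2) = 0.
Hypothesis beta_concave : forall q1 q2 t, 1/2 <= q1 <= 1 -> 1/2 <= q2 <= 1 -> 0 <= t <= 1 ->
  t * beta q1 + (1 - t) * beta q2 <= beta (t * q1 + (1 - t) * q2).

Definition informative_value (V : R -> R) (b q : R) : R :=
  - beta q - C * (1 - q) + delta * signal_avg V b q.

Definition cascade_value (V : R -> R) (b : R) : R := - C * Rmin b (1 - b) + delta * V b.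

Lemma qvalue_informative V b q : 1 - q <= b <= q -> qvalue V b q = informative_value V b q.
Proof.
  intros Hbq. unfold qvalue, continuation, informative_value, rA.
  destruct (Rle_dec (1 - q) b); [|lra]. destruct (Rle_dec b q); [|lra].
  replace (Rmin b (Rmin (1 - b) (1 - q))) with (1 - q) by (unfold Rmin; repeat destruct Rle_dec; lra).
  ring.
Qed.

Lemma qvalue_cascade V b q : ~ (1 - q <= b <= q) -> 1/2 <= q <= 1 ->
  qvalue V b q <= cascade_value V b.
Proof.
  intros Hbq Hq. pose proof (beta_range q Hq). unfold qvalue, continuation, cascade_value, rA.
  replace (Rmin b (Rmin (1 - b) (1 - q))) with (Rmin b (1 - b)) by (unfold Rmin; repeat destruct Rle_dec; lra).
  destruct (Rle_dec (1 - q) b); [destruct (Rle_dec b q)|]; lra.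
Qed.

Lemma qvalue_half V b : 0 <= b <= 1 -> qvalue V b (1/2) = cascade_value V b.
Proof.
  intros Hb. unfold qvalue, continuation, cascade_value, rA. rewrite beta_half.
  replace (Rmin b (Rmin (1 - b) (1 - 1/2))) with (Rmin b (1 - b)) by (unfold Rmin; repeat destruct Rle_dec; lra).
  destruct (Rle_dec (1 - 1/2) b); [destruct (Rle_dec b (1/2))|]; try ring.
  rewrite signal_avg_half. ring.
Qed.

Lemma informative_half_le V b : informative_value V b (1/2) <= cascade_value V b.
Proof.
  unfold informative_value, cascade_value. rewrite beta_half, signal_avg_half.
  assert (Rmin b (1 - b) <= 1/2) by (unfold Rmin; destruct Rle_dec; lra).
  nra.
Qed.

Lemma informative_value_convex_q V b q1 q2 t : convex01 V -> 0 <= b <= 1 ->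
  1/2 <= q1 <= 1 -> 1/2 <= q2 <= 1 -> 0 <= t <= 1 ->
  informative_value V b (t * q1 + (1 - t) * q2)
    <= t * informative_value V b q1 + (1 - t) * informative_value V b q2.
Proof.
  intros HV Hb Hq1 Hq2 Ht. unfold informative_value.
  pose proof (beta_concave q1 q2 t Hq1 Hq2 Ht).
  pose proof (signal_avg_convex_q V b HV Hb q1 q2 t ltac:(lra) ltac:(lra) Ht).
  nra.
Qed.

Lemma informative_value_convex_b V q : convex01 V -> 0 <= q <= 1 ->
  convex01 (fun b => informative_value V b q).
Proof.
  intros HV Hq x y t Hx Hy Ht. unfold informative_value.
  pose proof (signal_avg_convex_b V q HV Hq x y t Hx Hy Ht). simpl in *. nra.
Qed.

Lemma cascade_value_convex V : convex01 V -> convex01 (cascade_value V).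
Proof.
  intros HV x y t Hx Hy Ht. unfold cascade_value.
  pose proof (HV x y t Hx Hy Ht).
  assert (t * Rmin x (1 - x) + (1 - t) * Rmin y (1 - y)
            <= Rmin (t * x + (1 - t) * y) (1 - (t * x + (1 - t) * y))).
  { assert (Rmin x (1 - x) <= x /\ Rmin x (1 - x) <= 1 - x) by (unfold Rmin; destruct Rle_dec; lra).
    assert (Rmin y (1 - y) <= y /\ Rmin y (1 - y) <= 1 - y) by (unfold Rmin; destruct Rle_dec; lra).
    unfold Rmin at 3. destruct Rle_dec; nra. }
  nra.
Qed.

Lemma informative_le_bellman V b q : bounded01 V -> convex01 V -> 0 <= b <= 1 -> 1/2 <= q <= 1 ->
  informative_value V b q <= bellman V b.
Proof.
  intros HVb HV Hb Hq.
  destruct (classic (1 - q <= b <= q)) as [Hinf | Hcasc].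
  { rewrite <- qvalue_informative by exact Hinf. apply bellman_ge; assumption. }
  set (q0 := Rmax b (1 - b)).
  assert (Hq0 : q < q0).
  { unfold q0, Rmax. destruct (Rle_dec b (1 - b)); apply Rnot_le_lt; intro; apply Hcasc; split; lra. }
  assert (Hb0 : 1 - q0 <= b <= q0) by (unfold q0, Rmax; destruct Rle_dec; lra).
  assert (Hq01 : q0 <= 1) by (unfold q0, Rmax; destruct Rle_dec; lra).
  set (l := (q - 1/2) / (q0 - 1/2)).
  assert (Hl : 0 <= l <= 1).
  { split; [apply Rdiv_le_0_compat; lra | apply (Rdiv_le_1 (q - 1/2) (q0 - 1/2) ltac:(lra)); lra]. }
  assert (Hql : q = l * q0 + (1 - l) * (1/2)) by (unfold l; field; lra).
  pose proof (informative_value_convex_q V b q0 (1/2) l HV Hb ltac:(lra) ltac:(lra) Hl) as Hmix.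
  rewrite <- Hql, <- (qvalue_informative V b q0 Hb0) in Hmix.
  pose proof (bellman_ge V b q0 HVb Hb ltac:(lra)).
  pose proof (bellman_ge V b (1/2) HVb Hb ltac:(lra)). rewrite qvalue_half in * by exact Hb.
  pose proof (informative_half_le V b).
  nra.
Qed.

Lemma bellman_convex V : bounded01 V -> convex01 V -> convex01 (bellman V).
Proof.
  intros HVb HV x y t Hx Hy Ht.
  assert (Hz : 0 <= t * x + (1 - t) * y <= 1) by nra.
  apply bellman_le; [exact Hz|]. intros q Hq.
  pose proof (informative_le_bellman V x q HVb HV Hx Hq).
  pose proof (informative_le_bellman V y q HVb HV Hy Hq).
  pose proof (bellman_ge V x (1/2) HVb Hx ltac:(lra)).
  pose proof (bellman_ge V y (1/2) HVb Hy ltac:(lra)).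
  rewrite !qvalue_half in * by assumption.
  destruct (classic (1 - q <= t * x + (1 - t) * y <= q)) as [Hinf | Hcasc].
  - rewrite qvalue_informative by exact Hinf.
    pose proof (informative_value_convex_b V q HV ltac:(lra) x y t Hx Hy Ht). simpl in *. nra.
  - pose proof (qvalue_cascade V _ q Hcasc Hq).
    pose proof (cascade_value_convex V HV x y t Hx Hy Ht). nra.
Qed.

Lemma value_iter_convex n : convex01 (value_iter n).
Proof.
  induction n as [|n IHn]; simpl.
  - intros x y t _ _ _. lra.
  - apply bellman_convex; [apply value_iter_bounded | exact IHn].
Qed.

Lemma VAstar_convex : convex01 (VAstar beta C delta).
Proof.
  apply (convex01_approx _ value_iter (3 * K) delta delta_01 value_iter_convex).
  exact VAstar_near_value_iter.
Qed.

End Convexity.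

End Bellman.

Theorem theorem2 (p C delta : R) (beta : R -> R)
  (hp : 1/2 <= p < 1) (hC : 0 < C) (hdelta : 0 <= delta < 1)
  (hbeta_nonneg : forall q, 1/2 <= q <= 1 -> 0 <= beta q)
  (hbeta_incr : forall q1 q2, 1/2 <= q1 -> q1 <= q2 -> q2 <= 1 -> beta q1 <= beta q2)
  (hbeta_cont : continuous_on_Icc beta (1/2) 1)
  (hbeta_concave : forall q1 q2 t, 1/2 <= q1 <= 1 -> 1/2 <= q2 <= 1 -> 0 <= t <= 1 ->
      t * beta q1 + (1 - t) * beta q2 <= beta (t * q1 + (1 - t) * q2))
  (hbeta_p : beta p = 0) :
  forall b1 b2 t, 0 <= b1 <= 1 -> 0 <= b2 <= 1 -> 0 <= t <= 1 ->
    VAstar beta C delta (t * b1 + (1 - t) * b2)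
      <= t * VAstar beta C delta b1 + (1 - t) * VAstar beta C delta b2.
Proof.
  assert (Hrange : forall q, 1/2 <= q <= 1 -> 0 <= beta q <= beta 1).
  { intros q Hq. split; [apply hbeta_nonneg | apply hbeta_incr]; lra. }
  assert (Hhalf : beta (1/2) = 0).
  { pose proof (hbeta_incr (1/2) p ltac:(lra) ltac:(lra) ltac:(lra)).
    pose proof (hbeta_nonneg (1/2) ltac:(lra)). lra. }
  exact (VAstar_convex beta C delta hC hdelta Hrange Hhalf hbeta_concave).
Qed.
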